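(* Let $V$ be a $1$-dimensional topological manifold (not necessarily Hausdorff) which is simply connected and has a countable basis. Then there exists a continuous function $f:V\to\mathbb{R}$ which is a local homeomorphism (every point of $V$ has an open neighborhood mapped homeomorphically by $f$ onto an open subset of $\mathbb{R}$).
   Context: A topological manifold of dimension $n$ is a topological space in which every point has an open neighborhood homeomorphic to $\mathbb{R}^n$; the Hausdorff axiom is not assumed. A covering of a space $V$ is a pair $(\widetilde V,p)$ with $p:\widetilde V\to V$ continuous such that every point of $V$ has an open neighborhood $U$ for which $p^{-1}(U)$ is partitioned into open sets each mapped homeomorphically onto $U$ by $p$. A space $V$ is simply connected if it is connected and for every connected covering $(\widetilde V,p)$ of $V$, the map $p$ is a homeomorphism. *)

From mathcomp Require Import all_boot all_order all_algebra.
From mathcomp Require Import all_classical all_reals topology normedtype.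
Set Implicit Arguments. Unset Strict Implicit. Unset Printing Implicit Defensive.
Import Order.TTheory GRing.Theory Num.Theory.
Import numFieldNormedType.Exports.
Local Open Scope classical_set_scope.

Definition homeo_onto {X Y : topologicalType} (A : set X) (B : set Y)
  (f : X -> Y) : Prop :=
  exists g : Y -> X,
    [/\ (forall x, A x -> B (f x)),
        (forall y, B y -> A (g y)),
        (forall x, A x -> g (f x) = x) &
        (forall y, B y -> f (g y) = y)] /\
    ({within A, continuous f} /\ {within B, continuous g}).

(* topological manifold of dimension 1 (no Hausdorff axiom):
   every point has an open neighborhood homeomorphic to R *)
Definition manifold1 (R : realType) (V : topologicalType) : Prop :=
  forall x : V, exists U : set V,
    [/\ open U, U x & exists phi : V -> R, homeo_onto U [set: R] phi].

Definition connected_space (X : topologicalType) : Prop :=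
  [set: X] !=set0 /\ connected [set: X].

Definition is_covering {W V : topologicalType} (p : W -> V) : Prop :=
  continuous p /\
  forall x : V, exists U : set V, [/\ open U, U x &
    exists (I : Type) (S : I -> set W),
      [/\ (forall i, open (S i)),
          (forall i j, i <> j -> S i `&` S j = set0),
          \bigcup_i S i = p @^-1` U &
          (forall i, homeo_onto (S i) U p)]].

Definition simply_connected (V : topologicalType) : Prop :=
  connected_space V /\
  forall (W : topologicalType) (p : W -> V),
    connected_space W -> is_covering p -> homeo_onto [set: W] [set: V] p.

Definition local_homeo {X Y : topologicalType} (f : X -> Y) : Prop :=
  forall x : X, exists U : set X,
    [/\ open U, U x, open (f @` U) & homeo_onto U (f @` U) f].

(* Cover V by countably many charts phi_k : U_k -> R and transport each U_k
   into its own slot ]1/(k+2), 1/(k+1)[ of ]0, 1[: Lebesgue measure pulls back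
   to a finite measure on V which charges every nonempty open set and no
   point.  Measured along chart k it gives a continuous, strictly increasing
   [mass k t], and since transition maps are monotone, mass_j o phi_j agrees
   near every point of U_j /\ U_k with +-mass_k o phi_k + c.  Germs of functions
   locally of this form build an etale space over V whose sheets are their
   graphs over chart domains, so a connected component of it is a connected
   covering of V.  As V is simply connected this covering has a continuous
   section, which reads off a function that is locally +-mass_k o phi_k + c,
   hence a local homeomorphism. *)

From HB Require Import structures.
From mathcomp Require Import all_boot all_order all_algebra.
From mathcomp Require Import all_classical all_reals all_analysis.
From mathcomp Require Import measurable_realfun.
From mathcomp Require Import ring lra.
Set Implicit Arguments. Unset Strict Implicit. Unset Printing Implicit Defensive.
Import Order.TTheory GRing.Theory Num.Theory.
Import numFieldNormedType.Exports.
Local Open Scope classical_set_scope.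
Local Open Scope ring_scope.

Lemma connected_set_type {X : topologicalType} (A : set X) :
  connected A -> connected [set: A].
Proof.
move=> cA; have [[a0 Aa0]|A0] := pselect (A !=set0); last first.
  suff -> : [set: A] = set0 by exact: connected0.
  by apply/seteqP; split=> // -[x Ax] _; apply: A0; exists x; exact: set_mem.
pose a : A := exist _ a0 (mem_set Aa0).
have := connected_continuous_connected cA
  ((@subspace_valL_continuousP' _ A _ a id).2 (fun x => @cvg_id _ _)).
suff -> : valL_ a id @` A = [set: A] by [].
apply/seteqP; split=> // x _; exists (set_val x); first exact: set_valP.
exact: (congr1 (fun f => f x) (valLK a id)).
Qed.

Section Germs.
Context {V : topologicalType} {R : Type}.

Definition germ (g : V -> R) (y : V) : set (V -> R) :=
  [set h | \forall z \near y, h z = g z].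

Lemma germE (g h : V -> R) y :
  germ g y = germ h y <-> \forall z \near y, g z = h z.
Proof.
split=> [gh|ngh].
  have : germ h y h by exact: nearW.
  by rewrite -gh; apply: filterS => z ->.
by apply/seteqP; split=> f; apply: filter_app; apply: filterS ngh => z -> ->.
Qed.

Lemma near_germE (g h : V -> R) (y : V) : (\forall z \near y, g z = h z) ->
  \forall z \near y, germ g z = germ h z.
Proof. by move=> /nbhs_interior ngh; apply: filterS ngh => z /germE. Qed.

End Germs.

(* A point [(y, E)] is isolated unless [E] is the germ at [y] of an
   [admissible] function [g]; near such a point the topology is the one of the
   graph [z |-> (z, germ g z)]. *)
Definition etale {V : topologicalType} {R : Type}
  (admissible : (V -> R) -> V -> Prop) : Type := (V * set (V -> R))%type.

Section Etale.
Context {V : topologicalType} {R : Type} (admissible : (V -> R) -> V -> Prop).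
Local Notation W := (etale admissible).

HB.instance Definition _ := gen_eqMixin W.
HB.instance Definition _ := gen_choiceMixin W.

Definition etale_open (O : set W) := forall y g, admissible g y ->
  O (y, germ g y) -> \forall z \near y, O (z, germ g z).

Lemma etale_openT : etale_open setT.
Proof. by move=> y g _ _; exact: filterT. Qed.

Lemma etale_openI : setI_closed etale_open.
Proof.
by move=> A B oA oB y g gy [Ay By]; apply: filterI; [exact: oA | exact: oB].
Qed.

Lemma etale_open_bigcup (I : Type) (O : I -> set W) :
  (forall i, etale_open (O i)) -> etale_open (\bigcup_i O i).
Proof.
by move=> oO y g gy [i _ Oi]; apply: filterS (oO i y g gy Oi) => z; exists i.
Qed.

HB.instance Definition _ :=
  isOpenTopological.Build W etale_openT etale_openI etale_open_bigcup.

Lemma open_etaleE (O : set W) : open O = etale_open O.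
Proof. by []. Qed.

Lemma continuous_etale_fst : continuous (fst : W -> V).
Proof.
apply/continuousP => A oA; rewrite open_etaleE => y g _ Ay.
exact: (open_nbhs_nbhs (conj oA Ay)).
Qed.

Definition etale_section (g : V -> R) (z : V) : W := (z, germ g z).

Lemma continuous_etale_section (g : V -> R) y : admissible g y ->
  {for y, continuous (etale_section g)}.
Proof.
move=> gy B; rewrite nbhsE; case=> O [oO Oy] OB.
move: oO; rewrite open_etaleE => oO.
by apply: filterS (oO y g gy Oy) => z /OB.
Qed.

Lemma open_etale_sheet (g : V -> R) (O : set V) : open O ->
  open [set w : W | O w.1 /\ w.2 = germ g w.1].
Proof.
move=> oO; rewrite open_etaleE => y h _ /= [Oy /esym/germE hg].
have Oz : \forall z \near y, O z by exact: (open_nbhs_nbhs (conj oO Oy)).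
by apply: filterS2 Oz (near_germE hg) => z Oz /esym.
Qed.

End Etale.

Section RealLine.
Variable R : realType.
Implicit Types (a b s t : R) (f : R -> R).

Lemma continuous_inj_image_itvoo a b f : a <= b ->
    {within `[a, b], continuous f} -> {in `[a, b] &, injective f} ->
  f @` `]a, b[ = (f @`]a, b[)%classic.
Proof.
move=> ab fct finj; have fmono := itv_continuous_inj_mono fct finj.
apply/seteqP; split=> [_ [x xab <-]|y /= yI].
  by apply: mono_mem_image_itvoo.
have /(continuous_inj_image_segmentP ab fct finj) [x xab fxy] :
    y \in f @`[a, b] by apply: subset_itv_oo_cc.
exists x => //=; rewrite in_itv /= !lt_neqAle !(itvP xab) !andbT.
by apply/andP; split; apply/eqP => ex; move: yI;
  rewrite -fxy -ex in_itv /= gt_min lt_max ltxx ?orbF /= => /andP[]; lra.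
Qed.

Definition to_unit t := t / (1 + `|t|).
Definition of_unit t := t / (1 - `|t|).

Lemma to_unit_lt1 t : `|to_unit t| < 1.
Proof.
have t0 : 0 < 1 + `|t| by exact: ltr_pwDl.
by rewrite normrM normfV (gtr0_norm t0) ltr_pdivrMr // mul1r ltrDr.
Qed.

Lemma to_unitK : cancel to_unit of_unit.
Proof.
move=> t; have t0 : 0 < 1 + `|t| by exact: ltr_pwDl.
rewrite /of_unit /to_unit normrM normfV (gtr0_norm t0).
by field; rewrite addrK oner_eq0 gt_eqF.
Qed.

Lemma of_unitK t : `|t| < 1 -> to_unit (of_unit t) = t.
Proof.
move=> t1; have t0 : 0 < 1 - `|t| by rewrite subr_gt0.
rewrite /of_unit /to_unit normrM normfV (gtr0_norm t0).
by field; rewrite subrK oner_eq0 gt_eqF.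
Qed.

Lemma of_unit_continuous t : `|t| < 1 -> {for t, continuous of_unit}.
Proof.
move=> t1; apply: cvgM; first exact: cvg_id.
apply: cvgV; first by rewrite subr_eq0 eq_sym lt_eqF.
by apply: cvgB; [exact: cvg_cst | exact: norm_continuous].
Qed.

Definition slot_lo (n : nat) : R := n.+2%:R^-1.
Definition slot_hi (n : nat) : R := n.+1%:R^-1.
Definition slot (n : nat) : set R := `](slot_lo n), (slot_hi n)[.
Definition slot_mid (n : nat) : R := (slot_lo n + slot_hi n) / 2.
Definition slot_rad (n : nat) : R := (slot_hi n - slot_lo n) / 2.
Definition to_slot n t := slot_mid n + slot_rad n * to_unit t.
Definition of_slot n t := of_unit ((t - slot_mid n) / slot_rad n).

Lemma slot_rad_gt0 n : 0 < slot_rad n.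
Proof.
by rewrite divr_gt0 // subr_gt0 ltf_pV2 ?posrE ?ltr0n // ltr_nat.
Qed.

Lemma slot_norm_lt1 n t : slot n t -> `|(t - slot_mid n) / slot_rad n| < 1.
Proof.
have r0 := slot_rad_gt0 n; rewrite /slot /= in_itv /= => /andP[t1 t2].
rewrite normrM normfV (gtr0_norm r0) ltr_pdivrMr // mul1r ltr_norml.
by apply/andP; split; move: r0; rewrite /slot_mid /slot_rad; lra.
Qed.

Lemma to_slot_mem n t : slot n (to_slot n t).
Proof.
have r0 := slot_rad_gt0 n; have := to_unit_lt1 t; rewrite ltr_norml.
rewrite /slot /= in_itv /= /to_slot => /andP[s1 s2]; move: r0.
rewrite /slot_mid /slot_rad => r0; apply/andP; split; nra.
Qed.

Lemma to_slotK n : cancel (to_slot n) (of_slot n).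
Proof.
have r0 := slot_rad_gt0 n.
by move=> t; rewrite /of_slot /to_slot addrC addKr mulrC mulKf ?gt_eqF ?to_unitK.
Qed.

Lemma of_slotK n t : slot n t -> to_slot n (of_slot n t) = t.
Proof.
move=> st; have r0 := slot_rad_gt0 n.
rewrite /to_slot /of_slot of_unitK ?slot_norm_lt1 //.
by rewrite mulrC divfK ?gt_eqF // addrC subrK.
Qed.

Lemma of_slot_continuous n t : slot n t -> {for t, continuous (of_slot n)}.
Proof.
move=> st; apply: continuous_comp; last exact/of_unit_continuous/slot_norm_lt1.
by apply: cvgM; [apply: cvgB; [exact: cvg_id | exact: cvg_cst] | exact: cvg_cst].
Qed.

Lemma slot_inj n m t : slot n t -> slot m t -> n = m.
Proof.
wlog nm : n m / (n < m)%N.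
  by move=> wlog_nm tn tm; case: (ltngtP n m) => [|/wlog_nm/(_ tm tn)|]; auto.
rewrite /slot /= !in_itv /= => /andP[t1 _] /andP[_ t2].
have : slot_hi m <= slot_lo n by rewrite lef_pV2 ?posrE ?ltr0n // ler_nat.
by move/(lt_le_trans (lt_trans t1 t2)); rewrite ltxx.
Qed.

Lemma slot_sub01 n : slot n `<=` `]0, 1[.
Proof.
move=> t; rewrite /slot /= !in_itv /= => /andP[t1 t2]; apply/andP; split.
  by apply: lt_trans t1; rewrite invr_gt0 ltr0n.
by apply: lt_le_trans t2 _; rewrite invr_le1 ?ler1n ?unitfE ?pnatr_eq0 ?ltr0n.
Qed.

Lemma continuous_inj_inverse f : continuous f -> injective f ->
  exists g, cancel f g /\ forall t, {for f t, continuous g}.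
Proof.
move=> fct finj; pose g y := xget 0 [set t | f t = y].
have fK : cancel f g by move=> t; apply: xget_unique => // s /finj.
exists g; split=> // t.
have fKt : {near t, cancel f g} by exact: filterE.
have fctt : {near t, continuous f} by exact: filterE.
by have /nbhs_singleton := near_can_continuous fKt fctt.
Qed.

Definition signed (e : bool) t := if e then t else - t.

Lemma signed_signedD e1 e2 s t :
  signed e1 (signed e2 s + t) = signed (e1 == e2) s + signed e1 t.
Proof. by case: e1; case: e2; rewrite /= ?opprD ?opprK. Qed.

Lemma signed_affine_inj f a e c e' c' : {homo f : s t / s < t} ->
    (\forall t \near a, signed e (f t) + c = signed e' (f t) + c') ->
  (e, c) = (e', c').
Proof.
move=> fmono /nbhs_ballP [d /= d0 hd].
have fa := hd a (ballxx _ d0).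
have /hd fad : ball a d (a + d / 2) by rewrite /ball /= ltr_distlC; lra.
have : f a < f (a + d / 2) by apply: fmono; lra.
move: fa fad; clear hd; case: e; case: e' => /= *;
  by [congr pair; lra | exfalso; lra].
Qed.

Lemma signed_affine_increments (g f : R -> R) e (I : interval R) a : a \in I ->
    {in I &, forall s t, s < t -> g t - g s = signed e (f t - f s)} ->
  {in I, forall t, g t = signed e (f t) + (g a - signed e (f a))}.
Proof.
move=> aI inc t tI; case: (ltgtP t a) => [ta|a_t|->]; last by rewrite addrC subrK.
- by move: (inc t a tI aI ta); clear inc; case: e => /=; lra.
- by move: (inc a t aI tI a_t); clear inc; case: e => /=; lra.
Qed.

Lemma bigcap_ballSinv (t : R) :
  \bigcap_n ball t n.+1%:R^-1 = [set t].
Proof.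
apply/seteqP; split=> [s st|_ -> n _]; last exact: ballxx.
apply/eqP; apply: contraT; rewrite -subr_eq0 -normr_gt0 => ts0.
have [N _ /(_ N (leqnn N)) NSinv] := near_infty_natSinv_lt (PosNum ts0).
by move: (st N I); rewrite /ball /= distrC => /(lt_trans NSinv); rewrite ltxx.
Qed.

End RealLine.

Lemma near_eq_continuous_at {X Y : topologicalType} (f g : X -> Y) x :
  (\forall z \near x, f z = g z) -> {for x, continuous g} ->
  {for x, continuous f}.
Proof.
move=> fg gx; have fgx : f x = g x := nbhs_singleton fg.
rewrite /prop_for /continuous_at fgx.
by apply: cvg_trans gx; apply: near_eq_cvg; apply: filterS fg.
Qed.

(** * Countable atlases *)

Record chart (R : realType) (V : topologicalType) := Chart {
  chart_dom : set V; chart_fun : V -> R; chart_inv : R -> V }.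

Definition is_chart (R : realType) (V : topologicalType) (c : chart R V) :=
  [/\ open (chart_dom c), (forall t, chart_dom c (chart_inv c t)),
      cancel (chart_inv c) (chart_fun c),
      (forall x, chart_dom c x -> chart_inv c (chart_fun c x) = x) &
      {within chart_dom c, continuous chart_fun c} /\ continuous (chart_inv c)].

Lemma manifold1_chart (R : realType) (V : topologicalType) : manifold1 R V ->
  forall x : V, exists2 c : chart R V, is_chart c & chart_dom c x.
Proof.
move=> M x.
have [U [oU Ux [phi [chi [[_ Uchi chiK phiK] [phi_cont chi_cont]]]]]] := M x.
exists (Chart U phi chi) => //; split=> //= [t|t|]; first exact: Uchi.
  exact: phiK.
by split=> //; exact/continuous_subspace_setT.
Qed.

Lemma manifold1_countable_atlas (R : realType) (V : topologicalType) :
    manifold1 R V -> @second_countable V -> V ->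
  exists A : nat -> chart R V,
    (forall n, is_chart (A n)) /\ forall x, exists n, chart_dom (A n) x.
Proof.
move=> M [B B_countable [_ B_basis]] v0.
have [code code_inj] := countable_injP _ B_countable.
have [c0 c0_chart _] := manifold1_chart M v0.
pose fits n (c : chart R V) :=
  is_chart c /\ exists2 b, B b & code b = n /\ b `<=` chart_dom c.
pose A n := if pselect (exists c, fits n c) is left h then sval (cid h) else c0.
have A_fits n : (exists c, fits n c) -> fits n (A n).
  by rewrite /A; case: pselect => // h _; exact: svalP (cid h).
exists A; split=> [n|x].
  by rewrite /A; case: pselect => // h; case: (svalP (cid h)).
have [c c_chart cx] := manifold1_chart M x.
have /B_basis [b [Bb bx] bc] : nbhs x (chart_dom c).
  by apply: open_nbhs_nbhs; split => //; case: c_chart.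
exists (code b).
have c_fits : fits (code b) c by split=> //; exists b.
have [_ [b' Bb' [code_b' b'A]]] := A_fits _ (ex_intro _ c c_fits).
by apply: b'A; rewrite (code_inj _ _ _ _ code_b') ?inE.
Qed.

Section Atlas.
Variables (R : realType) (V : topologicalType).
Variables (U : nat -> set V) (phi : nat -> V -> R) (chi : nat -> R -> V).
Hypothesis oU : forall k, open (U k).
Hypothesis Uchi : forall k t, U k (chi k t).
Hypothesis phiK : forall k, cancel (chi k) (phi k).
Hypothesis chiK : forall k x, U k x -> chi k (phi k x) = x.
Hypothesis phi_cont : forall k, {within U k, continuous (phi k)}.
Hypothesis chi_cont : forall k, continuous (chi k).
Hypothesis U_cover : forall x, exists k, U k x.

Local Notation mu := (@lebesgue_measure R).

Lemma chart_continuous_at k x : U k x -> {for x, continuous (phi k)}.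
Proof.
move=> Ux; have := @phi_cont k; rewrite continuous_open_subspace; last exact: oU.
by apply; rewrite inE.
Qed.

Lemma chi_inj k : injective (chi k).
Proof. exact: can_inj (phiK k). Qed.

Lemma image_chartE k (O : set R) : chi k @` O = U k `&` phi k @^-1` O.
Proof.
apply/seteqP; split=> [_ [t Ot <-]|z [Uz Oz]].
  by rewrite /= phiK; split=> //; exact: Uchi.
by exists (phi k z); rewrite ?chiK.
Qed.

Lemma open_chart_image k (O : set R) : open O -> open (chi k @` O).
Proof.
rewrite image_chartE; apply: (continuous_inP _ (oU k)).1 => x /set_mem.
exact: chart_continuous_at.
Qed.

Lemma near_chart k y (P : set V) : U k y -> (\forall z \near y, P z) ->
  \forall t \near phi k y, P (chi k t).
Proof. by move=> Uy; rewrite -{1}(chiK Uy); apply: chi_cont. Qed.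

Lemma connected_chart_dom k : connected (U k).
Proof.
have -> : U k = chi k @` setT by rewrite image_chartE preimage_setT setIT.
apply: connected_continuous_connected (continuous_subspaceT (@chi_cont k)).
by apply/connected_intervalP => x y _ _ z _.
Qed.

(** * A finite measure on V and measured coordinates *)

(* [spread] lays the chart domains side by side in the disjoint slots of
   ]0, 1[, so that Lebesgue measure induces the finite measure [vol] on V. *)
Definition slot_chart n t := chi n (of_slot n t).

Definition spread (A : set V) : set R :=
  \bigcup_n (slot n `&` slot_chart n @^-1` A).

Definition vol (A : set V) : R := fine (mu (spread A)).

Lemma open_spread A : open A -> open (spread A).
Proof.
move=> oA; apply: bigcup_open => n _.
apply: (continuous_inP _ (interval_open _ _)).1 => // t /set_mem tn.
exact: continuous_comp (of_slot_continuous tn) (@chi_cont n _).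
Qed.

Lemma spread_setU A B : spread (A `|` B) = spread A `|` spread B.
Proof.
apply/seteqP; split=> [t [n _ [tn [At|Bt]]]|t [[n _ [tn At]]|[n _ [tn Bt]]]].
- by left; exists n.
- by right; exists n.
- by exists n => //; split=> //; left.
- by exists n => //; split=> //; right.
Qed.

Lemma spread_disjoint A B : A `&` B = set0 -> spread A `&` spread B = set0.
Proof.
move=> AB0; apply/seteqP; split=> // t [[n _ [tn At]] [m _ [tm Bt]]].
rewrite (slot_inj tm tn) in Bt.
by have : (A `&` B) (slot_chart n t) by []; rewrite AB0.
Qed.

Lemma bigcap_spread (A : nat -> set V) :
  \bigcap_i spread (A i) `<=` spread (\bigcap_i A i).
Proof.
move=> t tA; have [n _ [tn _]] := tA 0%N I; exists n => //; split=> // i _.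
by have [m _ [tm]] := tA i I; rewrite (slot_inj tm tn).
Qed.

Lemma countable_spread1 x : countable (spread [set x]).
Proof.
apply: (@sub_countable _ _ _ (range (fun n => to_slot n (phi n x)))).
  apply: subset_card_le => t [n _ [tn /= <-]].
  by exists n => //; rewrite /slot_chart phiK of_slotK.
apply: card_le_trans (card_image_le _ _) _.
exact: countableP.
Qed.

Lemma measurable_spread A : open A -> measurable (spread A).
Proof. by move/open_spread/open_measurable. Qed.

Lemma measurable_spread1 x : measurable (spread [set x]).
Proof.
apply: countable_measurable (countable_spread1 x) => t.
exact: measurable_set1.
Qed.

Lemma mu_spread1 x : mu (spread [set x]) = 0%E.
Proof. exact: countable_lebesgue_measure0 (countable_spread1 x). Qed.

Lemma mu_spread_lty A : measurable (spread A) -> (mu (spread A) < +oo)%E.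
Proof.
move=> mA; apply: (@le_lt_trans _ _ (mu `]0%R, 1%R[)).
  by apply: le_measure; rewrite ?inE // => t [n _ [/slot_sub01]].
by rewrite lebesgue_measure_itv /= lte01 /= ltry.
Qed.

Lemma mu_spread_fin_num A : measurable (spread A) -> mu (spread A) \is a fin_num.
Proof. by move=> mA; rewrite ge0_fin_numE ?mu_spread_lty. Qed.

Lemma vol_setU A B : measurable (spread A) -> measurable (spread B) ->
  A `&` B = set0 -> vol (A `|` B) = vol A + vol B.
Proof.
move=> mA mB AB0; rewrite /vol spread_setU measureU ?spread_disjoint //.
by rewrite fineD ?mu_spread_fin_num.
Qed.

Lemma vol1 x : vol [set x] = 0.
Proof. by rewrite /vol mu_spread1. Qed.

Lemma le_vol A B : open A -> open B -> A `<=` B -> vol A <= vol B.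
Proof.
move=> oA oB AB; have [mA mB] := (measurable_spread oA, measurable_spread oB).
rewrite fine_le ?mu_spread_fin_num //; apply: le_measure; rewrite ?inE //.
by move=> t [n _ [tn /AB]]; exists n.
Qed.

Lemma vol_gt0 A x : open A -> A x -> 0 < vol A.
Proof.
move=> oA Ax; have [n Ux] := U_cover x.
have Au : spread A (to_slot n (phi n x)).
  exists n => //; split; first exact: to_slot_mem.
  by rewrite /preimage /slot_chart /= to_slotK chiK.
have /nbhs_ballP [r /= r0 rA] := open_nbhs_nbhs (conj (open_spread oA) Au).
apply: fine_gt0; rewrite mu_spread_lty ?andbT; last exact: measurable_spread.
apply: (@lt_le_trans _ _ (mu (ball (to_slot n (phi n x)) r))).
  by rewrite lebesgue_measure_ball ?ltW // lte_fin mulrn_wgt0.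
apply: le_measure; rewrite ?inE //; last exact: measurable_spread.
exact: measurable_ball.
Qed.

Lemma chart_image_disjoint k (A B : set R) :
  A `&` B = set0 -> chi k @` A `&` chi k @` B = set0.
Proof.
move=> AB0; apply/seteqP; split=> // _ [[a Aa <-] [b Bb /chi_inj ba]].
have : (A `&` B) a by split; rewrite // -ba.
by rewrite AB0.
Qed.

Lemma measurable_spread_chart k (O : set R) :
  open O -> measurable (spread (chi k @` O)).
Proof. by move/(open_chart_image k)/measurable_spread. Qed.

Definition mass k t := vol (chi k @` `]-oo, t[).

Lemma massB k s t : s < t -> mass k t - mass k s = vol (chi k @` `]s, t[).
Proof.
move=> st.
have itv_split : (`]-oo, t[ = (`]-oo, s[ `|` [set s]) `|` `]s, t[)%classic.
  apply/seteqP; split=> [u|u [[|->]|]]; rewrite /= ?in_itv /= ?andbT //.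
  - case: (ltgtP u s) => [us|su|->] ut;
      by [left; left | right; apply/andP | left; right].
  - by move=> us; exact: lt_trans st.
  - by move=> /andP[].
have disj1 : (`]-oo, s[ `&` [set s] = set0)%classic.
  apply/seteqP; split=> // u [] /=; rewrite in_itv /= => us eus.
  by rewrite eus ltxx in us.
have disj2 : ((`]-oo, s[ `|` [set s]) `&` `]s, t[ = set0)%classic.
  apply/seteqP; split=> // u [[|->]]; rewrite /= !in_itv /= ?ltxx //.
  by move=> us /andP[/(lt_trans us)]; rewrite ltxx.
set L := chi k @` [set` `]-oo, s[]; set P := chi k @` [set s].
set J := chi k @` [set` `]s, t[].
have mL : measurable (spread L).
  by apply: measurable_spread_chart; exact: interval_open.
have mJ : measurable (spread J).
  by apply: measurable_spread_chart; exact: interval_open.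
have mP : measurable (spread P) by rewrite /P image_set1; exact: measurable_spread1.
rewrite /mass itv_split !image_setU -/L -/P -/J vol_setU //; first last.
- by rewrite -image_setU chart_image_disjoint.
- by rewrite spread_setU; exact: measurableU.
rewrite vol_setU ?chart_image_disjoint //.
by rewrite /P image_set1 vol1 addr0 addrC addKr.
Qed.

Lemma mass_lt k : {homo mass k : s t / s < t}.
Proof.
move=> s t st; rewrite -subr_gt0 massB //.
apply: (vol_gt0 (x := chi k ((s + t) / 2))).
  by apply: open_chart_image; exact: interval_open.
by exists ((s + t) / 2); rewrite //= in_itv /=; apply/andP; split; lra.
Qed.

Lemma vol_chart_ball_cvg0 k t :
  vol (chi k @` ball t n.+1%:R^-1) @[n --> \oo] --> 0.
Proof.
pose F n := spread (chi k @` ball t n.+1%:R^-1).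
have mF n : measurable (F n) by apply: measurable_spread_chart; exact: ball_open.
have F_dec : {homo F : n m / (n <= m)%N >-> (m <= n)%O}.
  move=> n m nm; apply/asboolP => u [i _ [ui [s ts si]]].
  exists i => //; split=> //; exists s => //.
  by apply: le_ball ts; rewrite lef_pV2 ?posrE ?ltr0n // ler_nat.
have F_lim0 : mu (\bigcap_n F n) = 0%E.
  apply: countable_lebesgue_measure0.
  apply: sub_countable (countable_spread1 (chi k t)).
  apply: subset_card_le => u /bigcap_spread [n _ [un Pu]].
  exists n => //; split=> //=.
  have Uu : U k (slot_chart n u) by have [s _ <-] := Pu 0%N I; exact: Uchi.
  rewrite -(chiK Uu); congr (chi k _).
  suff : (\bigcap_i ball t i.+1%:R^-1) (phi k (slot_chart n u)).
    by rewrite bigcap_ballSinv.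
  by move=> i _; have [s ts <-] := Pu i I; rewrite phiK.
have : mu (F n) @[n --> \oo] --> 0%E.
  rewrite -F_lim0.
  have F0_lty := mu_spread_lty (mF 0%N).
  exact: nonincreasing_cvg_mu F0_lty mF (bigcapT_measurable mF) F_dec.
by move/fine_cvgP => [].
Qed.

Lemma mass_continuous k : continuous (mass k).
Proof.
move=> t; apply/cvgrPdist_lt => e e0.
have [N _ /(_ N (leqnn N))] := (cvgrPdist_lt _ _).1 (vol_chart_ball_cvg0 k t) e e0.
rewrite sub0r normrN => /(le_lt_trans (ler_norm _)) volN.
have : 0 < N.+1%:R^-1 :> R by rewrite invr_gt0.
move: volN; move: (N.+1%:R^-1) => r volN r0.
have vol_sub (a b : R) : ball t r a -> ball t r b ->
    vol (chi k @` `]a, b[) < e.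
  rewrite /ball /= !ltr_distlC => /andP[a1 a2] /andP[b1 b2].
  apply: le_lt_trans volN; apply: le_vol.
  - by apply: open_chart_image; exact: interval_open.
  - by apply: open_chart_image; exact: ball_open.
  apply: image_subset => u /=; rewrite in_itv /= /ball /= ltr_distlC.
  by move=> /andP[au ub]; apply/andP; split; lra.
near=> s; have ts : ball t r s by near: s; apply/nbhs_ballP; exists r.
case: (ltgtP s t) => [st|ts'|->]; last by rewrite subrr normr0.
- by rewrite gtr0_norm ?subr_gt0 ?mass_lt // massB //; exact: vol_sub (ballxx _ r0).
- rewrite ltr0_norm ?subr_lt0 ?mass_lt // opprB massB //.
  exact: vol_sub (ballxx _ r0) ts.
Unshelve. all: by end_near.
Qed.

Lemma chart_transition_image j k (A : set R) : chi k @` A `<=` U j ->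
  chi k @` A = chi j @` ((phi j \o chi k) @` A).
Proof.
move=> AUj; apply/seteqP; split=> [_ [t At <-]|_ [_ [t At <-] <-]].
  exists (phi j (chi k t)); first by exists t.
  by rewrite chiK //; apply: AUj; exists t.
by rewrite /= chiK; [exists t | apply: AUj; exists t].
Qed.

Lemma massB_transition j k s t : s < t -> chi k @` `[s, t] `<=` U j ->
  mass k t - mass k s = mass j (Num.max (phi j (chi k s)) (phi j (chi k t))) -
                      mass j (Num.min (phi j (chi k s)) (phi j (chi k t))).
Proof.
move=> st stU; set T := phi j \o chi k.
have T_cont : {within `[s, t], continuous T}.
  apply: continuous_in_subspaceT => u /set_mem us.
  apply: continuous_comp; first exact: chi_cont.
  by apply: chart_continuous_at; apply: stU; exists u.
have T_inj : {in `[s, t] &, injective T}.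
  move=> u v us vs /(congr1 (chi j)).
  rewrite /T /= !chiK; first exact: chi_inj.
    by apply: stU; exists v.
  by apply: stU; exists u.
have sub : chi k @` `]s, t[ `<=` U j.
  by move=> _ [u us <-]; apply: stU; exists u => //; exact: subset_itv_oo_cc.
rewrite massB // (chart_transition_image sub) continuous_inj_image_itvoo ?ltW //.
rewrite -massB // gt_min !lt_max !ltxx /= orbF -neq_lt.
have st' := ltW st; apply: contraTneq st => Tst.
have -> : s = t by apply: T_inj; rewrite // in_itv /= lexx st'.
by rewrite ltxx.
Qed.

Definition mcoord k (ec : bool * R) t := signed ec.1 (mass k t) + ec.2.

Lemma mass_transition j k y : U j y -> U k y ->
  exists ec, \forall z \near y, mass j (phi j z) = mcoord k ec (phi k z).
Proof.
move=> Ujy Uky; set a := phi k y; set T := phi j \o chi k.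
have /nbhs_ballP [d /= d0 dUj] := near_chart Uky (open_nbhs_nbhs (conj (oU j) Ujy)).
set I := `]a - d, a + d[.
have IUj t : t \in I -> U j (chi k t) by move=> tI; apply: dUj; rewrite ball_itv.
have T_cont : {within [set` I], continuous T}.
  apply: continuous_in_subspaceT => t /set_mem tI.
  apply: continuous_comp; first exact: chi_cont.
  exact: chart_continuous_at (IUj t tI).
have T_inj : {in I &, injective T}.
  move=> s t sI tI /(congr1 (chi j)).
  by rewrite /T /= !chiK; try exact: IUj; exact: chi_inj.
have segUj s t : s \in I -> t \in I -> chi k @` `[s, t] `<=` U j.
  move=> sI tI _ [u ust <-]; apply: IUj; move: sI tI ust.
  rewrite /= !in_itv /= => /andP[s1 s2] /andP[t1 t2] /andP[u1 u2].
  by apply/andP; split; lra.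
have [e T_incr] : exists e, {in I &, forall s t, s < t ->
    mass j (T t) - mass j (T s) = signed e (mass k t - mass k s)}.
  case: (itv_continuous_inj_mono T_cont T_inj) => [Tinc|Tdec];
    [exists true | exists false] => s t sI tI st;
    rewrite (massB_transition st (segUj s t sI tI)) -!/(T _).
  - by have Tst := Tinc s t sI tI st; rewrite min_l ?max_r // ltW.
  - by have Tts := Tdec t s tI sI st; rewrite min_r ?max_l /= ?opprB // ltW.
have aI : a \in I by rewrite in_itv /=; apply/andP; split; lra.
exists (e, mass j (T a) - signed e (mass k a)).
have oJ : open (chi k @` [set` I]) by apply: open_chart_image; exact: interval_open.
have Jy : (chi k @` [set` I]) y by exists a; rewrite ?chiK.
have := open_nbhs_nbhs (conj oJ Jy); rewrite image_chartE.
apply: filterS => z [Ukz zI].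
by rewrite -{1}(chiK Ukz) -/(T _) (signed_affine_increments aI T_incr zI).
Qed.

Lemma mcoord_transition j k ec y : U j y -> U k y ->
  exists ec', \forall z \near y, mcoord j ec (phi j z) = mcoord k ec' (phi k z).
Proof.
move=> Ujy Uky; have [[e c] near_jk] := mass_transition Ujy Uky.
exists (ec.1 == e, signed ec.1 c + ec.2).
by apply: filterS near_jk => z; rewrite /mcoord => ->; rewrite signed_signedD addrA.
Qed.

Lemma mcoord_near_inj k ec ec' y : U k y ->
  (\forall z \near y, mcoord k ec (phi k z) = mcoord k ec' (phi k z)) -> ec = ec'.
Proof.
move=> Uky /(near_chart Uky) near_t.
have : \forall t \near phi k y, mcoord k ec t = mcoord k ec' t.
  by apply: filterS near_t => t; rewrite /= phiK.
clear near_t; case: ec ec' => [e c] [e' c'].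
by apply: signed_affine_inj; exact: mass_lt.
Qed.

Lemma mcoord_continuous k ec : continuous (mcoord k ec).
Proof.
move=> t; apply: cvgD; last exact: cvg_cst.
by case: ec.1; [|apply: cvgN]; exact: mass_continuous.
Qed.

Lemma mass_inj k : injective (mass k).
Proof.
by move=> s t est; case: (ltgtP s t) => // /(mass_lt k); rewrite est ltxx.
Qed.

Lemma mcoord_inj k ec : injective (mcoord k ec).
Proof. by move=> s t /addIr; case: ec.1 => [|/oppr_inj] /=; exact: mass_inj. Qed.

(** * The covering space of germs *)

Definition admissible (g : V -> R) y :=
  exists k ec, U k y /\ \forall z \near y, g z = mcoord k ec (phi k z).

Local Notation W := (etale admissible).

Lemma admissible_near g y : admissible g y -> \forall z \near y, admissible g z.
Proof.
move=> [k [ec [Uky /nbhs_interior near_g]]].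
have Uk_near : \forall z \near y, U k z := open_nbhs_nbhs (conj (oU k) Uky).
by apply: filterS2 Uk_near near_g => z Ukz gz; exists k, ec.
Qed.

Lemma admissible_mcoord k ec z : U k z -> admissible (mcoord k ec \o phi k) z.
Proof. by move=> Ukz; exists k, ec; split => //; exact: filterE. Qed.

Definition admissible_germ (w : W) :=
  exists2 g, admissible g w.1 & w.2 = germ g w.1.

Lemma open_admissible_germ : open admissible_germ.
Proof.
rewrite open_etaleE => y g gy _.
by apply: filterS (admissible_near gy) => z gz; exists g.
Qed.

Lemma closed_admissible_germ : closed admissible_germ.
Proof.
rewrite -[admissible_germ]setCK; apply: open_closedC.
by rewrite open_etaleE => y g gy nvy; exfalso; apply: nvy; exists g.
Qed.

Definition base_point : W :=
  (chi 0 0, germ (mcoord 0 (true, 0) \o phi 0) (chi 0 0)).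

Definition germ_comp := connected_component [set: W] base_point.

Lemma germ_comp_base : germ_comp base_point.
Proof. exact: connected_component_refl. Qed.

Lemma germ_comp_admissible : germ_comp `<=` admissible_germ.
Proof.
have cC : connected germ_comp by exact: component_connected.
suff -> : germ_comp = germ_comp `&` admissible_germ by move=> w [].
apply/esym/cC.
- exists base_point; split; first exact: germ_comp_base.
  by exists (mcoord 0 (true, 0) \o phi 0); rewrite //; exact/admissible_mcoord/Uchi.
- by exists admissible_germ => //; exact: open_admissible_germ.
- by exists admissible_germ => //; exact: closed_admissible_germ.
Qed.

Definition sheet k ec : set W :=
  [set w | U k w.1 /\ w.2 = germ (mcoord k ec \o phi k) w.1].

Lemma sheetE k ec :
  sheet k ec = etale_section admissible (mcoord k ec \o phi k) @` U k.
Proof.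
apply/seteqP; split=> [[z E] [/= Ukz ->]|_ [z Ukz <-]] //.
by exists z.
Qed.

Lemma sheet_sub_germ_comp k ec w :
  sheet k ec w -> germ_comp w -> sheet k ec `<=` germ_comp.
Proof.
move=> sw Cw; rewrite /germ_comp (same_connected_component Cw).
apply: connected_component_max sw _ _ => //; rewrite sheetE.
apply: connected_continuous_connected; first exact: connected_chart_dom.
apply: continuous_in_subspaceT => z /set_mem Ukz.
exact/continuous_etale_section/admissible_mcoord.
Qed.

Lemma sheet_disjoint k ec ec' : ec != ec' -> sheet k ec `&` sheet k ec' = set0.
Proof.
move=> ecec'; apply/seteqP; split=> // -[z E] [[/= Ukz ->] [_ /germE near_eq]].
by move: ecec'; rewrite (mcoord_near_inj Ukz near_eq) eqxx.
Qed.

Lemma admissible_germ_sheet k w :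
  admissible_germ w -> U k w.1 -> exists ec, sheet k ec w.
Proof.
case: w => y E [g [j [ec [Ujy near_g]]] /= ->] Uky.
have [ec' near_jk] := mcoord_transition ec Ujy Uky.
exists ec'; split=> //; apply/germE.
by apply: filterS2 near_g near_jk => z -> ->.
Qed.

Definition germ_proj (w : germ_comp) : V := (val w).1.

Lemma continuous_germ_proj : continuous germ_proj.
Proof.
move=> w; apply: continuous_comp; first exact: initial_continuous.
exact: continuous_etale_fst.
Qed.

Lemma connected_space_germ_comp : connected_space germ_comp.
Proof.
split; first by exists (exist _ base_point (mem_set germ_comp_base)).
exact/connected_set_type/component_connected.
Qed.

Lemma sheet_homeo k ec : sheet k ec `<=` germ_comp ->
  homeo_onto [set w : germ_comp | sheet k ec (val w)] (U k) germ_proj.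
Proof.
move=> sC; set g := mcoord k ec \o phi k.
pose w0 : germ_comp := exist _ base_point (mem_set germ_comp_base).
pose s z : germ_comp := insubd w0 (etale_section admissible g z).
have sE z : U k z -> val (s z) = etale_section admissible g z.
  by move=> Ukz; rewrite insubdK // inE; apply: sC; rewrite sheetE; exists z.
exists s; split; [split|split].
- by move=> w [].
- by move=> z Ukz; rewrite /= sE.
- move=> w [Uw ew]; apply: val_inj; rewrite sE //.
  by move: ew Uw; rewrite /germ_proj; case: (val w) => y E /= ->.
- by move=> z Ukz; rewrite /germ_proj sE.
- exact: continuous_subspaceT continuous_germ_proj.
apply/subspace_sigL_continuousP; apply: continuous_comp_initial.
have -> : set_val \o sigL (U k) s = sigL (U k) (etale_section admissible g).
  by apply/funext => z; rewrite /= !set_valE /sigL /= sE //; exact: set_valP.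
apply/subspace_sigL_continuousP; apply: continuous_in_subspaceT => z /set_mem Ukz.
exact/continuous_etale_section/admissible_mcoord.
Qed.

Lemma is_covering_germ_proj : is_covering germ_proj.
Proof.
split=> [|x]; first exact: continuous_germ_proj.
have [k Ukx] := U_cover x; exists (U k); split; [exact: oU | exact: Ukx |].
exists {ec | sheet k ec `<=` germ_comp}.
exists (fun i => [set w : germ_comp | sheet k (sval i) (val w)]).
split.
- by move=> i; exists (sheet k (sval i)) => //; apply: open_etale_sheet; exact: oU.
- move=> [ec i] [ec' j] ij; apply/seteqP; split=> // w [/= wi wj].
  have [eqec|/sheet_disjoint disj] := eqVneq ec ec'; last first.
    by have : (sheet k ec `&` sheet k ec') (val w) by []; rewrite disj.
  by exfalso; apply: ij; subst ec'; congr exist; exact: Prop_irrelevance.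
- apply/seteqP; split=> [w [i _ []] //|w Uw].
  have Cw : germ_comp (val w) := set_mem (valP w).
  have [ec sw] := admissible_germ_sheet (germ_comp_admissible Cw) Uw.
  by exists (exist _ ec (sheet_sub_germ_comp sw Cw)).
- by move=> [ec sC]; exact: sheet_homeo.
Qed.

Lemma near_mcoord_continuous (f : V -> R) x k ec : U k x ->
  (\forall z \near x, f z = mcoord k ec (phi k z)) -> {for x, continuous f}.
Proof.
move=> Ukx /near_eq_continuous_at; apply.
exact: continuous_comp (chart_continuous_at Ukx) (@mcoord_continuous k ec _).
Qed.

Lemma near_mcoord_local_homeo (f : V -> R) x k ec : U k x ->
    (\forall z \near x, f z = mcoord k ec (phi k z)) ->
  exists O, [/\ open O, O x, open (f @` O) & homeo_onto O (f @` O) f].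
Proof.
move=> Ukx /nbhs_interior/(near_chart Ukx)/nbhs_ballP [d /= d0 near_f].
have [Hinv [HK Hinv_cont]] :=
  continuous_inj_inverse (@mcoord_continuous k ec) (@mcoord_inj k ec).
set a := phi k x; set I := `]a - d, a + d[%classic.
have fO t : I t -> \forall z \near chi k t, f z = mcoord k ec (phi k z).
  by move=> It; apply: near_f; rewrite ball_itv.
have fOE t : I t -> f (chi k t) = mcoord k ec t.
  by move=> /fO /nbhs_singleton; rewrite phiK.
have img : f @` (chi k @` I) = mcoord k ec @` I.
  apply/seteqP; split=> [_ [_ [t It <-] <-]|_ [t It <-]].
    by exists t; rewrite ?fOE.
  by exists (chi k t); [exists t | rewrite fOE].
exists (chi k @` I); split.
- by apply: open_chart_image; exact: interval_open.
- by exists a; rewrite ?chiK // /I /= in_itv /=; apply/andP; split; lra.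
- rewrite img continuous_inj_image_itvoo; first exact: interval_open.
  + lra.
  + exact/continuous_subspaceT/mcoord_continuous.
  + by move=> s t _ _; exact: mcoord_inj.
exists (chi k \o Hinv); split; [split|split].
- by move=> z Oz; exists z.
- by rewrite img => _ [t It <-]; exists t; rewrite //= HK.
- by move=> _ [t It <-]; rewrite /= fOE // HK.
- by rewrite img => _ [t It <-]; rewrite /= HK fOE.
- apply: continuous_in_subspaceT => _ /set_mem [t It <-].
  apply: near_eq_continuous_at (fO t It) _.
  apply: continuous_comp; first exact: chart_continuous_at (Uchi k t).
  exact: mcoord_continuous.
- rewrite img; apply: continuous_in_subspaceT => _ /set_mem [t It <-].
  exact: continuous_comp (Hinv_cont t) (@chi_cont k _).
Qed.

Definition germ_value (w : W) : R := xget 0 [set r | exists2 h, w.2 h & h w.1 = r].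

Lemma germ_value_section g y : germ_value (etale_section admissible g y) = g y.
Proof.
apply: xget_unique; first by exists g => //; exact: filterE.
by move=> r [h /= /nbhs_singleton ->].
Qed.

Lemma section_near_mcoord (q : V -> germ_comp) : continuous q ->
    (forall y, germ_proj (q y) = y) ->
  forall x, exists k ec,
    U k x /\ \forall z \near x, germ_value (val (q z)) = mcoord k ec (phi k z).
Proof.
move=> q_cont qK x.
have [g + qx] := germ_comp_admissible (set_mem (valP (q x))).
rewrite -/(germ_proj (q x)) qK => -[k [ec [Ukx near_g]]].
exists k, ec; split=> //.
pose S := [set w : W | setT w.1 /\ w.2 = germ g w.1].
have oS : open S by exact: open_etale_sheet openT.
have Sqx : S (val (q x)) by [].
have qx_cont : {for x, continuous (fun z => val (q z) : W)}.
  by apply: continuous_comp; [exact: q_cont | exact: initial_continuous].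
have near_S : \forall z \near x, S (val (q z)).
  exact: qx_cont _ (open_nbhs_nbhs (conj oS Sqx)).
apply: filterS2 near_S near_g => z [_ Sqz] <-.
have -> : val (q z) = etale_section admissible g z.
  by move: (qK z) Sqz; rewrite /germ_proj; case: (val (q z)) => y E /= -> ->.
by rewrite germ_value_section.
Qed.

Lemma simply_connected_local_homeo :
  simply_connected V -> exists f : V -> R, continuous f /\ local_homeo f.
Proof.
move=> [_ simply_conn].
have [q [[_ _ _ qK] [_ q_cont]]] :=
  simply_conn _ _ connected_space_germ_comp is_covering_germ_proj.
have {}q_cont : continuous q by exact/continuous_subspace_setT.
exists (fun x => germ_value (val (q x))); split=> x;
  have [k [ec [Ukx near_f]]] := section_near_mcoord q_cont (fun y => qK y I) x.
- exact: near_mcoord_continuous Ukx near_f.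
- exact: near_mcoord_local_homeo Ukx near_f.
Qed.

End Atlas.

Theorem proposition2 (R : realType) (V : topologicalType) :
  manifold1 R V -> simply_connected V -> @second_countable V ->
  exists f : V -> R, continuous f /\ local_homeo f.
Proof.
move=> M sV V2; have [[[v0 _] _] _] := sV.
have [A [A_chart A_cover]] := manifold1_countable_atlas M V2 v0.
apply: (@simply_connected_local_homeo R V (fun k => chart_dom (A k))
  (fun k => chart_fun (A k)) (fun k => chart_inv (A k))) => //;
  try exact: A_cover; by move=> k; case: (A_chart k) => ? ? ? ? [].
Qed.
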